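(* Let $\mathcal{X}$ be an infinite instance domain, $l\ge0$ an integer, and $\mathcal{C}^l$ the class of unions of at most $l$ singletons. Then for every integer $t\ge0$, $\mathcal{S}(\mathcal{C}^l,t)=\binom{t}{\le l}$.
   Context: $\mathcal{C}^l$ is the class of functions $\mathcal{X}\to\{-1,+1\}$ of the form $x\mapsto1-2I(x\in D)$ with $D\subseteq\mathcal{X}$, $|D|\le l$. $\binom{t}{\le l}=\sum_{i=0}^{l}\binom{t}{i}$. For a depth-$t$ $\mathcal{X}$-valued tree $\mathbf{x}=(\mathbf{x}_1,\dots,\mathbf{x}_t)$, $\mathbf{x}_s:\{\pm1\}^{s-1}\to\mathcal{X}$, let $S(\mathcal{H},\mathbf{x})=\{\epsilon\in\{\pm1\}^t:\exists h\in\mathcal{H},\ \epsilon_s=h(\mathbf{x}_s(\epsilon_1,\dots,\epsilon_{s-1}))\ \forall s\}$ and $\mathcal{S}(\mathcal{H},t)=\max_{\mathbf{x}}|S(\mathcal{H},\mathbf{x})|$ for $t\ge1$; $\mathcal{S}(\mathcal{H},0)=1$ if $\mathcal{H}\ne\emptyset$. *)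

From mathcomp Require Import all_boot.
From mathcomp Require Import boolp.
Set Implicit Arguments. Unset Strict Implicit. Unset Printing Implicit Defensive.

(* Signs {-1,+1} are encoded as bool: true = +1, false = -1. *)

Definition infinite_type (X : eqType) : Prop :=
  forall s : seq X, exists x, x \notin s.

(* h_D : x |-> 1 - 2 I(x \in D), i.e. +1 (true) iff x \notin D. *)
Definition Cl (X : eqType) (l : nat) (h : X -> bool) : Prop :=
  exists D : seq X, size (undup D) <= l /\ forall x, h x = (x \notin D).

(* A depth-t X-valued tree: x_s(eps_1..eps_{s-1}) is represented by
   tr [:: eps_1; ...; eps_{s-1}]  (only prefixes of length < t are used). *)
Definition tree (X : Type) := seq bool -> X.

(* eps realized on tree tr by some h in H (indices 0-based: s = 0..t-1). *)
Definition realized (X : Type) (H : (X -> bool) -> Prop) (t : nat)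
    (tr : tree X) (e : t.-tuple bool) : Prop :=
  exists h, H h /\ forall s, s < t -> nth false e s = h (tr (take s e)).

Definition Sset (X : Type) (H : (X -> bool) -> Prop) (t : nat) (tr : tree X)
  : {set t.-tuple bool} := [set e | `[< realized H tr e >]].

(* S(H, t) = max over trees of |S(H, x)| (at most 2^t). For t = 0 this gives
   1 when H is nonempty, as in the paper. *)
Definition Sgrowth (X : Type) (H : (X -> bool) -> Prop) (t : nat) : nat :=
  \max_(n < (2 ^ t).+1 | `[< exists tr : tree X, #|Sset H t tr| = n >]) n.

Definition binom_le (t l : nat) : nat := \sum_(i < l.+1) 'C(t, i).

From mathcomp Require Import all_boot.
From mathcomp Require Import boolp.
Set Implicit Arguments. Unset Strict Implicit. Unset Printing Implicit Defensive.

(* Upper bound: a sign sequence e realized on a tree is recovered from the set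
   of depths at which e is -1 and the queried point has not been queried
   earlier along the path; for h_D these points are distinct elements of D, so
   there are at most l of them.  Lower bound: on the tree that queries t fixed
   distinct points at depths 0, ..., t-1, every set of at most l depths is the
   -1 pattern of some h_D. *)

Lemma Sgrowth_eq (X : Type) (H : (X -> bool) -> Prop) (t b : nat) :
  (forall tr : tree X, #|Sset H t tr| <= b) ->
  (exists tr : tree X, #|Sset H t tr| = b) ->
  Sgrowth H t = b.
Proof.
move=> le_b [tr0 card_tr0].
have lt_b : b < (2 ^ t).+1.
  by rewrite ltnS -card_tr0 (leq_trans (max_card _)) // card_tuple card_bool.
apply/eqP; rewrite eqn_leq; apply/andP; split.
  by apply/bigmax_leqP => n /asboolP [tr <-].
apply: (@leq_bigmax_cond _ _ (fun n : 'I_(2 ^ t).+1 => val n) (Ordinal lt_b)).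
by apply/asboolP; exists tr0.
Qed.

Lemma card_small_sets (T : finType) (l : nat) :
  #|[set A : {set T} | #|A| <= l]| = \sum_(k < l.+1) 'C(#|T|, k).
Proof.
elim: l => [|l IHl].
  rewrite big_ord1 -card_draws; apply: eq_card => A.
  by rewrite !inE leqn0.
have split_le : [set A : {set T} | #|A| <= l.+1]
    = [set A : {set T} | #|A| <= l] :|: [set A : {set T} | #|A| == l.+1].
  by apply/setP => A; rewrite !inE leq_eqVlt ltnS orbC.
rewrite big_ord_recr /= -IHl -(card_draws T) split_le cardsU.
suff -> : [set A : {set T} | #|A| <= l] :&: [set A : {set T} | #|A| == l.+1] = set0.
  by rewrite cards0 subn0.
apply/setP => A; rewrite !inE.
by case: eqP => [-> |]; rewrite ?ltnn ?andbF ?andbT.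
Qed.

Lemma binom_leE (t l : nat) :
  #|[set A : {set 'I_t} | #|A| <= l]| = binom_le t l.
Proof. by rewrite card_small_sets card_ord. Qed.

Definition mem_nat (t : nat) (A : {set 'I_t}) (n : nat) : bool :=
  [exists i in A, val i == n].

Lemma mem_natE (t : nat) (A : {set 'I_t}) (i : 'I_t) : mem_nat A i = (i \in A).
Proof.
apply/existsP/idP => [[j /andP[jA /eqP/val_inj <-]] // | iA].
by exists i; rewrite iA eqxx.
Qed.

Section Decoding.
Variables (X : eqType) (t : nat) (tr : tree X).

Definition fresh_minus (e : t.-tuple bool) : {set 'I_t} :=
  [set i : 'I_t | ~~ nth false e i &&
     all (fun j => tr (take j e) != tr (take i e)) (iota 0 i)].

Definition repeats_minus (b : seq bool) : bool :=
  has (fun j => ~~ nth false b j && (tr (take j b) == tr b)) (iota 0 (size b)).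

Definition next_bit (A : {set 'I_t}) (b : seq bool) : bool :=
  ~~ (mem_nat A (size b) || repeats_minus b).

Fixpoint decode (A : {set 'I_t}) (n : nat) : seq bool :=
  if n is n'.+1 then rcons (decode A n') (next_bit A (decode A n')) else [::].

Lemma realized_next_bit (H : (X -> bool) -> Prop) (e : t.-tuple bool) (n : nat) :
  realized H tr e -> n < t -> nth false e n = next_bit (fresh_minus e) (take n e).
Proof.
case=> h [_ eh] lt_nt.
have size_pre : size (take n e) = n by rewrite size_takel // size_tuple ltnW.
have eh_lt j : j < n -> nth false e j = h (tr (take j e)).
  by move=> lt_jn; apply: eh (ltn_trans lt_jn lt_nt).
rewrite /next_bit.
have -> : repeats_minus (take n e)
    = has (fun j => ~~ nth false e j && (tr (take j e) == tr (take n e))) (iota 0 n).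
  rewrite /repeats_minus size_pre; apply: eq_in_has => j.
  by rewrite mem_iota => /andP[_ lt_jn]; rewrite nth_take // take_takel // ltnW.
rewrite size_pre (_ : n = Ordinal lt_nt) // mem_natE inE /= eh //.
set x := tr (take n e); case hx: (h x) => /=.
  apply/esym/hasPn => j; rewrite mem_iota => /andP[_ lt_jn].
  by rewrite eh_lt //; case: eqP => [-> | _]; rewrite ?hx ?andbF.
case: hasP => [_ | no_rep]; rewrite ?orbT //= orbF; apply/esym/negbF.
apply/allP => j j_in; apply/negP => /eqP eq_x.
apply: no_rep; exists j => //; move: j_in; rewrite mem_iota => /andP[_ lt_jn].
by rewrite eh_lt // eq_x hx eqxx.
Qed.

Lemma decode_fresh_minus (H : (X -> bool) -> Prop) (e : t.-tuple bool) :
  realized H tr e -> decode (fresh_minus e) t = e.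
Proof.
move=> re.
suff /(_ t (leqnn t)) : forall n, n <= t -> decode (fresh_minus e) n = take n e.
  by rewrite take_oversize ?size_tuple.
elim=> [|n IHn] le_nt; first by rewrite take0.
rewrite /= IHn 1?ltnW // (take_nth false) ?size_tuple //.
by rewrite (realized_next_bit re).
Qed.

Lemma card_fresh_minus (l : nat) (e : t.-tuple bool) :
  realized (Cl l) tr e -> #|fresh_minus e| <= l.
Proof.
case=> h [[D [size_D hD]] eh].
rewrite cardE -(size_map (fun i : 'I_t => tr (take i e))).
apply: leq_trans size_D; apply: uniq_leq_size.
  rewrite map_inj_in_uniq ?enum_uniq // => i j.
  rewrite !mem_enum !inE => /andP[_ new_i] /andP[_ new_j] eq_ij.
  have earlier k k' : k < k' ->
      all (fun j => tr (take j e) != tr (take k' e)) (iota 0 k') ->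
      tr (take k e) != tr (take k' e).
    by move=> lt_kk' /allP; apply; rewrite mem_iota.
  case: (ltngtP (val i) (val j)) => [lt_ij | lt_ji | /val_inj //].
    by move: (earlier _ _ lt_ij new_j); rewrite eq_ij eqxx.
  by move: (earlier _ _ lt_ji new_i); rewrite eq_ij eqxx.
move=> y /mapP[i]; rewrite mem_enum inE => /andP[minus_i _] ->.
by move: minus_i; rewrite eh // hD mem_undup negbK.
Qed.

Lemma card_Sset_Cl_le (l : nat) :
  #|Sset (Cl l) t tr| <= #|[set A : {set 'I_t} | #|A| <= l]|.
Proof.
rewrite -(@card_in_imset _ _ fresh_minus (Sset (Cl l) t tr)).
  apply: subset_leq_card; apply/subsetP => _ /imsetP[e e_in ->].
  by rewrite inE; apply: card_fresh_minus; move: e_in; rewrite inE => /asboolW.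
move=> e1 e2; rewrite !inE => /asboolW re1 /asboolW re2 eq_A.
by apply: val_inj; rewrite /= -(decode_fresh_minus re1) -(decode_fresh_minus re2) eq_A.
Qed.

End Decoding.

Lemma infinite_uniq_seq (X : eqType) (n : nat) :
  infinite_type X -> exists s : seq X, uniq s /\ size s = n.
Proof.
move=> infX; elim: n => [|n [s [uniq_s size_s]]]; first by exists [::].
by have [x x_notin] := infX s; exists (x :: s); rewrite /= x_notin uniq_s size_s.
Qed.

Section PathTree.
Variables (X : eqType) (t : nat) (s : seq X) (x0 : X).
Hypotheses (uniq_s : uniq s) (size_s : size s = t).

Definition path_tree : tree X := fun p => nth x0 s (size p).

Definition minus_at (A : {set 'I_t}) : t.-tuple bool :=
  [tuple ~~ mem_nat A i | i < t].

Lemma minus_at_inj : injective minus_at.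
Proof.
move=> A1 A2 eq_A; apply/setP => i.
move: (congr1 (fun e : t.-tuple bool => tnth e i) eq_A).
by rewrite !tnth_mktuple !mem_natE => /negb_inj.
Qed.

Lemma realized_minus_at (l : nat) (A : {set 'I_t}) :
  #|A| <= l -> realized (Cl l) path_tree (minus_at A).
Proof.
move=> card_A; pose D := [seq nth x0 s i | i : 'I_t <- enum A].
have inj_s : injective (fun i : 'I_t => nth x0 s i).
  by move=> i j /eqP; rewrite nth_uniq ?size_s // => /eqP/val_inj.
exists (fun x => x \notin D); split.
  exists D; split => //; apply: leq_trans (size_undup _) _.
  by rewrite size_map -cardE.
move=> k lt_kt; rewrite /path_tree size_takel; last by rewrite size_tuple ltnW.
rewrite -[k]/(val (Ordinal lt_kt)) -tnth_nth tnth_mktuple mem_natE.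
by rewrite (mem_map inj_s) mem_enum.
Qed.

Lemma card_Sset_path_tree_ge (l : nat) :
  #|[set A : {set 'I_t} | #|A| <= l]| <= #|Sset (Cl l) t path_tree|.
Proof.
rewrite -(card_imset _ minus_at_inj); apply: subset_leq_card.
apply/subsetP => _ /imsetP[A + ->]; rewrite !inE => card_A.
exact/asboolP/realized_minus_at.
Qed.

End PathTree.

Theorem mainTheorem18 (X : eqType) (HX : infinite_type X) (l t : nat) :
  Sgrowth (Cl (X := X) l) t = binom_le t l.
Proof.
rewrite -binom_leE; apply: Sgrowth_eq => [tr | ]; first exact: card_Sset_Cl_le.
have [s [uniq_s size_s]] := infinite_uniq_seq t HX.
have [x0 _] := HX [::].
exists (path_tree s x0); apply/eqP; rewrite eqn_leq card_Sset_Cl_le.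
exact: card_Sset_path_tree_ge.
Qed.
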